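(* Let $\mathscr T$ be a functor satisfying (T1)–(T4). Then $\Gamma$, defined on objects by $\Gamma(\mathcal M)=\mathscr P(\mathscr T(\mathbf{Lin}(\mathcal M)))$ and on morphisms by $\Gamma(k)(A)=\{k\circ a\circ k^{-1}\mid a\in A\}$, is a functor from $\mathbb{COL}$ to $\mathscr T\mathbb{ODA}$.
   Context: An involutive unital quantale is $(Q,\bigsqcup,\odot,{}^*,e)$: complete join-semilattice $Q$, associative $\odot$ distributing over arbitrary joins in each argument, unit $e$, ${}^*$ with $x^{**}=x$, $(x\odot y)^*=y^*\odot x^*$, $(\bigsqcup x_i)^*=\bigsqcup x_i^*$. An involutive generalized dynamic algebra (IDA) is such a quantale with ${\sim}\colon K\to K$ satisfying, for all $x,y$ and families $(x_i)$: ${\sim}(x\odot{\sim}{\sim}y)={\sim}(x\odot y)$; ${\sim}(\bigsqcup{\sim}{\sim}x_i)={\sim}(\bigsqcup x_i)$; $({\sim}x)^*={\sim}x$; ${\sim}{\sim}({\sim}{\sim}x\odot y)={\sim}({\sim}x\sqcup{\sim}({\sim}x\sqcup y))$. Test set $\widetilde K=\{{\sim}k\}$; $\bigvee W={\sim}{\sim}\bigsqcup W$; $w^\perp={\sim}w$; $k\preceq l$ iff $\bigvee\{k,l\}=l$; $k\bullet v={\sim}{\sim}(k\odot v)$; $k\equiv l$ iff $k\bullet w=l\bullet w$ for all $w\in\widetilde K$. IDA morphisms preserve arbitrary joins, $\odot$, ${}^*$, unit, ${\sim}$ (category $\mathbb{IDA}$); semi-Foulis means $(\widetilde K,\preceq,{}^\perp)$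 is a complete orthomodular lattice. $\mathbb{IM}$: involutive monoids and homomorphisms. For a complete orthomodular lattice $\mathcal M$: $\pi_m(x)=m\wedge(m^\perp\vee x)$; $\mathbf{Lin}(\mathcal M)$ is the set of maps $f$ admitting $f^*$ with $f(x)\le y^\perp\iff x\le f^*(y)^\perp$, an IDA under pointwise joins, composition, ${}^*$, $\mathrm{id}$, ${\sim}f=\pi_{f(1)^\perp}$. For an involutive submonoid $L\supseteq\{\pi_m\}$, $\mathscr P(L)$ is the IDA of subsets of $L$ with union, $A\odot B=\{a\circ b\}$, $A^*=\{a^*\}$, unit $\{\mathrm{id}_M\}$, ${\sim}A=\{\pi_{(\bigvee_{a\in A}a(1))^\perp}\}$. $\mathscr T\colon\mathbb{IDA}\to\mathbb{IM}$ satisfies: (T1) $\widetilde K\subseteq\mathscr T(K)\subseteq K$, $\mathscr T(K)$ an involutive submonoid; (T2) for semi-Foulis $\mathfrak K$ with $s=t\iff s\equiv t$ on $\mathscr T(K)$, $k\mapsto k\bullet(-)$ is an isomorphism $\mathscr T(\mathfrak K)\to\mathscr T(\mathbf{Lin}(\widetilde{\mathfrak K}))$; (T3) $f\mapsto\{f\}$ is an isomorphism $\mathscr T(\mathbf{Lin}(\mathcal M))\to\mathscr T(\mathscr P(\mathscr T(\mathbf{Lin}(\mathcal M))))$; (T4) $\mathscr T(f)$ is the restriction of $f$. A $\mathscr T$-based orthomodular dynamic algebra is an IDA with: (TODA1) $(\widetilde K,\preceq,{}^\perp)$ a complete orthomodular lattice; (TODA2) every $A$ with $\mathscr T(K)\subseteq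 A\subseteq K$ closed under $\odot$, ${}^*$, arbitrary joins equals $K$; (TODA3) for $S,T\subseteq\mathscr T(K)$, $\bigsqcup S=\bigsqcup T$ iff $S=T$; (TODA4) for $s,t\in\mathscr T(K)$, $s=t$ iff $s\equiv t$. $\mathscr T\mathbb{ODA}$: these objects with bijective IDA morphisms. $\mathbb{COL}$: complete orthomodular lattices with ortholattice isomorphisms (bijections $g$ with $m\le n\iff g(m)\le g(n)$, $g(m^\perp)=g(m)^\perp$). *)

From Stdlib Require Import ClassicalEpsilon.

Set Implicit Arguments.
Unset Strict Implicit.

Definition img {A B : Type} (f : A -> B) (S : A -> Prop) : B -> Prop :=
  fun z => exists a, S a /\ z = f a.
Definition pair {A : Type} (x y : A) : A -> Prop := fun z => z = x \/ z = y.
Definition is_lub {A : Type} (le : A -> A -> Prop) (W : A -> Prop) (s : A) : Prop :=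
  (forall w, W w -> le w s) /\ (forall u, (forall w, W w -> le w u) -> le s u).

Record COLops := { ocar :> Type; ole : ocar -> ocar -> Prop;
                   osup : (ocar -> Prop) -> ocar; oc : ocar -> ocar }.
Arguments ole : clear implicits.
Arguments osup : clear implicits.
Arguments oc : clear implicits.

Section COLdefs.
Variable M : COLops.
Definition ojoin (a b : M) : M := osup M (pair a b).
Definition omeet (a b : M) : M := oc M (ojoin (oc M a) (oc M b)).
Definition otop : M := osup M (fun _ => True).
Definition sasaki (m x : M) : M := omeet m (ojoin (oc M m) x).

Definition is_COL : Prop :=
  (forall a, ole M a a) /\
  (forall a b, ole M a b -> ole M b a -> a = b) /\
  (forall a b c, ole M a b -> ole M b c -> ole M a c) /\
  (forall W, is_lub (ole M) W (osup M W)) /\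
  (forall a b, ole M a b -> ole M (oc M b) (oc M a)) /\
  (forall a, oc M (oc M a) = a) /\
  (forall a, ojoin a (oc M a) = otop) /\
  (forall a b, ole M a b -> b = ojoin a (omeet b (oc M a))).

Definition COL_iso (N : COLops) (g : M -> N) (g' : N -> M) : Prop :=
  (forall x, g' (g x) = x) /\ (forall y, g (g' y) = y) /\
  (forall m n, ole M m n <-> ole N (g m) (g n)) /\
  (forall m, g (oc M m) = oc N (g m)).
End COLdefs.

Record IDAops := { car :> Type; jn : (car -> Prop) -> car; mul : car -> car -> car;
                   st : car -> car; un : car; sim : car -> car }.
Arguments jn : clear implicits.
Arguments mul : clear implicits.
Arguments st : clear implicits.
Arguments un : clear implicits.
Arguments sim : clear implicits.

Section IDAdefs.
Variable K : IDAops.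
Definition qle (x y : K) : Prop := jn K (pair x y) = y.
Definition bjn (x y : K) : K := jn K (pair x y).

Definition is_IDA : Prop :=
  (forall a, qle a a) /\
  (forall a b, qle a b -> qle b a -> a = b) /\
  (forall a b c, qle a b -> qle b c -> qle a c) /\
  (forall A, is_lub qle A (jn K A)) /\
  (forall x y z, mul K x (mul K y z) = mul K (mul K x y) z) /\
  (forall x, mul K (un K) x = x) /\ (forall x, mul K x (un K) = x) /\
  (forall x A, mul K x (jn K A) = jn K (img (mul K x) A)) /\
  (forall x A, mul K (jn K A) x = jn K (img (fun a => mul K a x) A)) /\
  (forall x, st K (st K x) = x) /\
  (forall x y, st K (mul K x y) = mul K (st K y) (st K x)) /\
  (forall A, st K (jn K A) = jn K (img (st K) A)) /\
  (forall x y, sim K (mul K x (sim K (sim K y))) = sim K (mul K x y)) /\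
  (forall A, sim K (jn K (img (fun x => sim K (sim K x)) A)) = sim K (jn K A)) /\
  (forall x, st K (sim K x) = sim K x) /\
  (forall x y, sim K (sim K (mul K (sim K (sim K x)) y))
               = sim K (bjn (sim K x) (sim K (bjn (sim K x) y)))).

Definition TildeCar : Type := { k : K | exists l, k = sim K l }.
Definition tmk (l : K) : TildeCar := exist _ (sim K l) (ex_intro _ l eq_refl).
Definition t_le (k l : TildeCar) : Prop :=
  sim K (sim K (jn K (pair (proj1_sig k) (proj1_sig l)))) = proj1_sig l.
Definition t_oc (k : TildeCar) : TildeCar := tmk (proj1_sig k).
Definition t_sup (W : TildeCar -> Prop) : TildeCar :=
  epsilon (inhabits (tmk (un K))) (fun s => is_lub t_le W s).
Definition tilde_ops : COLops := Build_COLops t_le t_sup t_oc.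

Definition bullet (k : K) (w : TildeCar) : TildeCar := tmk (sim K (mul K k (proj1_sig w))).
Definition equivk (k l : K) : Prop :=
  forall w : TildeCar, proj1_sig (bullet k w) = proj1_sig (bullet l w).

Definition IDA_hom (L : IDAops) (f : K -> L) : Prop :=
  (forall A, f (jn K A) = jn L (img f A)) /\
  (forall x y, f (mul K x y) = mul L (f x) (f y)) /\
  (forall x, f (st K x) = st L (f x)) /\
  f (un K) = un L /\
  (forall x, f (sim K x) = sim L (f x)).

Definition IM_iso_on (L : IDAops) (S : K -> Prop) (S' : L -> Prop) (phi : K -> L) : Prop :=
  (forall x, S x -> S' (phi x)) /\
  (forall x y, S x -> S y -> phi x = phi y -> x = y) /\
  (forall y, S' y -> exists x, S x /\ phi x = y) /\
  phi (un K) = un L /\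
  (forall x y, S x -> S y -> phi (mul K x y) = mul L (phi x) (phi y)) /\
  (forall x, S x -> phi (st K x) = st L (phi x)).
End IDAdefs.

Section Lin.
Variable M : COLops.
Definition has_adjoint (f : M -> M) : Prop :=
  exists g : M -> M, forall x y, ole M (f x) (oc M y) <-> ole M x (oc M (g y)).
Definition LinCar : Type := { f : M -> M | has_adjoint f }.
Definition idL : LinCar :=
  exist _ (fun x => x) (ex_intro (fun g : M -> M => forall x y,
    ole M x (oc M y) <-> ole M x (oc M (g y))) (fun x => x) (fun x y => iff_refl _)).
(* [liftL h] is h as an element of Lin(M); when h is adjointable (always the case
   below for a genuine complete OML) its underlying map is exactly h. *)
Definition liftL (h : M -> M) : LinCar :=
  match excluded_middle_informative (has_adjoint h) with
  | left p => exist _ h p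
  | right _ => idL
  end.
Definition Lin_jn (F : LinCar -> Prop) : LinCar :=
  liftL (fun x => osup M (fun z => exists f, F f /\ z = proj1_sig f x)).
Definition Lin_mul (f g : LinCar) : LinCar :=
  liftL (fun x => proj1_sig f (proj1_sig g x)).
Definition Lin_st (f : LinCar) : LinCar :=
  liftL (proj1_sig (constructive_indefinite_description _ (proj2_sig f))).
Definition Lin_sim (f : LinCar) : LinCar :=
  liftL (sasaki (oc M (proj1_sig f (otop M)))).
Definition Lin : IDAops := Build_IDAops Lin_jn Lin_mul Lin_st idL Lin_sim.

Variable L : LinCar -> Prop.
Definition PCar : Type := { A : LinCar -> Prop | forall a, A a -> L a }.
Definition P_jn (AA : PCar -> Prop) : PCar :=
  exist (fun B : LinCar -> Prop => forall a, B a -> L a)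
    (fun c => exists A : PCar, AA A /\ proj1_sig A c)
    (fun c (H : exists A : PCar, AA A /\ proj1_sig A c) =>
       match H with ex_intro _ A (conj _ HA) => proj2_sig A c HA end).
Definition P_mk (Q : LinCar -> Prop) : PCar :=
  exist (fun B : LinCar -> Prop => forall a, B a -> L a)
    (fun c => L c /\ Q c) (fun c (H : L c /\ Q c) => proj1 H).
(* the intersections with L below are no-ops when L is an involutive submonoid
   containing all Sasaki projections, as in the paper *)
Definition P_mul (A B : PCar) : PCar :=
  P_mk (fun c => exists a b, proj1_sig A a /\ proj1_sig B b /\ c = Lin_mul a b).
Definition P_st (A : PCar) : PCar :=
  P_mk (fun c => exists a, proj1_sig A a /\ c = Lin_st a).
Definition P_un : PCar := P_mk (fun c => c = idL).
Definition P_sim (A : PCar) : PCar :=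
  P_mk (fun c => c = liftL (sasaki (oc M (osup M
          (fun z => exists a, proj1_sig A a /\ z = proj1_sig a (otop M)))))).
Definition Pset : IDAops := Build_IDAops P_jn P_mul P_st P_un P_sim.
End Lin.

Definition Tfun := forall K : IDAops, car K -> Prop.

Definition T_axioms (T : Tfun) : Prop :=
  (forall K, is_IDA K ->
     (forall k, T K (sim K k)) /\ T K (un K) /\
     (forall x y, T K x -> T K y -> T K (mul K x y)) /\
     (forall x, T K x -> T K (st K x))) /\
  (* functoriality, with (T4): T(f) is the restriction of f *)
  (forall (K L : IDAops) (f : K -> L), is_IDA K -> is_IDA L -> IDA_hom f ->
     forall x, T K x -> T L (f x)) /\
  (forall K, is_IDA K -> is_COL (tilde_ops K) ->
     (forall s t, T K s -> T K t -> (s = t <-> equivk s t)) ->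
     exists phi : K -> Lin (tilde_ops K),
       (forall k, T K k -> forall w, proj1_sig (phi k) w = bullet k w) /\
       IM_iso_on (T K) (T (Lin (tilde_ops K))) phi) /\
  (forall M, is_COL M ->
     exists psi : Lin M -> Pset (T (Lin M)),
       (forall f, T (Lin M) f -> proj1_sig (psi f) = (fun g => g = f)) /\
       IM_iso_on (T (Lin M)) (T (Pset (T (Lin M)))) psi).

Definition is_TODA (T : Tfun) (K : IDAops) : Prop :=
  is_IDA K /\
  is_COL (tilde_ops K) /\
  (forall A : K -> Prop, (forall x, T K x -> A x) ->
     (forall x y, A x -> A y -> A (mul K x y)) -> (forall x, A x -> A (st K x)) ->
     (forall S, (forall x, S x -> A x) -> A (jn K S)) -> forall x, A x) /\
  (forall S S' : K -> Prop, (forall x, S x -> T K x) -> (forall x, S' x -> T K x) ->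
     (jn K S = jn K S' <-> forall x, S x <-> S' x)) /\
  (forall s t, T K s -> T K t -> (s = t <-> equivk s t)).

Definition TODA_hom (K L : IDAops) (f : K -> L) : Prop :=
  IDA_hom f /\ (forall x y, f x = f y -> x = y) /\ (forall y, exists x, f x = y).

Definition Gamma (T : Tfun) (M : COLops) : IDAops := Pset (T (Lin M)).
Definition conjset (M N : COLops) (g : M -> N) (g' : N -> M)
  (A : LinCar M -> Prop) : LinCar N -> Prop :=
  fun c => exists a, A a /\ proj1_sig c = (fun x => g (proj1_sig a (g' x))).

(* Every adjointable map on a complete orthomodular lattice M preserves arbitrary joins, and
   the Sasaki projection pi_m is self-adjoint with pi_m(1) = m; hence Lin(M) is an IDA.  In P(L)
   all operations act elementwise, while ~A only depends on s(A) = \/_(a in A) a(1), which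
   satisfies s(~A) = s(A)^perp, s(\/ AA) = \/_(A in AA) s(A) and s(AB) = \/_(a in A) a(s(B)).
   So P(L) is an IDA whose tests are the singletons {pi_m}, ordered as M is.  By (T3) the
   elements of T(P(L)), for L = T(Lin M), are the singletons {f}: every set is the join of its
   singletons, and testing {f} against {pi_m} returns {pi_(f m)}, so equivalent singletons
   coincide.  An ortholattice isomorphism g makes a |-> g a g^-1 an IDA isomorphism
   Lin(M) -> Lin(N); by functoriality T restricts it to T(Lin M) -> T(Lin N), and its
   elementwise extension is a bijective IDA morphism Gamma(M) -> Gamma(N). *)

From Stdlib Require Import ClassicalEpsilon FunctionalExtensionality.
From Stdlib Require Import PropExtensionality ProofIrrelevance.

Set Implicit Arguments.
Unset Strict Implicit.

Lemma pred_ext {A : Type} (P Q : A -> Prop) : (forall z, P z <-> Q z) -> P = Q.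
Proof.
  intros H; apply functional_extensionality; intros z; apply propositional_extensionality, H.
Qed.

Section OrthomodularLattice.
Variable M : COLops.
Hypothesis HM : is_COL M.
Local Notation le := (ole M).
Local Notation c := (oc M).
Local Notation sup := (osup M).
Implicit Types a b d u x y : ocar M.

Lemma le_refl a : le a a.
Proof. destruct HM as (H & _); apply H. Qed.

Lemma le_antisym a b : le a b -> le b a -> a = b.
Proof. destruct HM as (_ & H & _); apply H. Qed.

Lemma le_trans a b d : le a b -> le b d -> le a d.
Proof. destruct HM as (_ & _ & H & _); apply H. Qed.

Lemma sup_ub (W : M -> Prop) a : W a -> le a (sup W).
Proof. destruct HM as (_ & _ & _ & H & _); apply (H W). Qed.

Lemma sup_le (W : M -> Prop) u : (forall a, W a -> le a u) -> le (sup W) u.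
Proof. destruct HM as (_ & _ & _ & H & _); apply (H W). Qed.

Lemma oc_anti a b : le a b -> le (c b) (c a).
Proof. destruct HM as (_ & _ & _ & _ & H & _); apply H. Qed.

Lemma ocK a : c (c a) = a.
Proof. destruct HM as (_ & _ & _ & _ & _ & H & _); apply H. Qed.

Lemma oml a b : le a b -> b = ojoin a (omeet b (c a)).
Proof. destruct HM as (_ & _ & _ & _ & _ & _ & _ & H); apply H. Qed.

Lemma oc_inj a b : c a = c b -> a = b.
Proof. intros H; rewrite <- (ocK a), <- (ocK b), H; reflexivity. Qed.

Lemma le_oc a b : le a b <-> le (c b) (c a).
Proof.
  split; [apply oc_anti|]. intros H; apply oc_anti in H; rewrite !ocK in H; exact H.
Qed.

Lemma le_oc_sym a b : le a (c b) -> le b (c a).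
Proof. intros H; apply oc_anti in H; rewrite ocK in H; exact H. Qed.

Lemma sup_ext (S S' : M -> Prop) : (forall z, S z <-> S' z) -> sup S = sup S'.
Proof. intros H; rewrite (pred_ext H); reflexivity. Qed.

Lemma sup_attained (S : M -> Prop) b : S b -> (forall a, S a -> le a b) -> sup S = b.
Proof. intros; apply le_antisym; [apply sup_le|apply sup_ub]; auto. Qed.

Lemma le_oc_sup x (S : M -> Prop) : le x (c (sup S)) <-> forall a, S a -> le x (c a).
Proof.
  split.
  - intros H a Ha; apply le_oc_sym, (le_trans (sup_ub Ha)), le_oc_sym, H.
  - intros H; apply le_oc_sym, sup_le; intros a Ha; apply le_oc_sym, H, Ha.
Qed.

Lemma join_l a b : le a (ojoin a b).
Proof. apply sup_ub; left; reflexivity. Qed.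

Lemma join_r a b : le b (ojoin a b).
Proof. apply sup_ub; right; reflexivity. Qed.

Lemma join_le a b u : le a u -> le b u -> le (ojoin a b) u.
Proof. intros; apply sup_le; intros w [-> | ->]; assumption. Qed.

Lemma join_mono a b a' b' : le a a' -> le b b' -> le (ojoin a b) (ojoin a' b').
Proof.
  intros; apply join_le; eapply le_trans; eauto; [apply join_l|apply join_r].
Qed.

Lemma le_join_eq a b : le a b <-> ojoin a b = b.
Proof.
  split; intros H.
  - apply le_antisym; [apply join_le; auto; apply le_refl|apply join_r].
  - rewrite <- H; apply join_l.
Qed.

Lemma join_idem_l a b : ojoin a (ojoin a b) = ojoin a b.
Proof. apply le_join_eq, join_l. Qed.

Lemma oc_meet a b : c (omeet a b) = ojoin (c a) (c b).
Proof. apply ocK. Qed.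

Lemma oc_join a b : c (ojoin a b) = omeet (c a) (c b).
Proof. unfold omeet; rewrite !ocK; reflexivity. Qed.

Lemma meet_l a b : le (omeet a b) a.
Proof. apply le_oc; rewrite oc_meet; apply join_l. Qed.

Lemma meet_r a b : le (omeet a b) b.
Proof. apply le_oc; rewrite oc_meet; apply join_r. Qed.

Lemma meet_ge a b x : le x a -> le x b -> le x (omeet a b).
Proof. intros; apply le_oc; rewrite oc_meet; apply join_le; apply oc_anti; assumption. Qed.

Lemma meet_comm a b : omeet a b = omeet b a.
Proof.
  unfold omeet, ojoin; f_equal; apply sup_ext; intros z; unfold pair; tauto.
Qed.

Lemma meet_mono a b a' b' : le a a' -> le b b' -> le (omeet a b) (omeet a' b').
Proof. intros; apply meet_ge; eapply le_trans; eauto; [apply meet_l|apply meet_r]. Qed.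

Lemma top_ge x : le x (otop M).
Proof. apply sup_ub; exact I. Qed.

Lemma meet_oc_join a b : le b a -> omeet a (ojoin (c a) b) = b.
Proof.
  intros H; apply oc_inj.
  rewrite oc_meet, oc_join, ocK, meet_comm.
  pose proof (oml (oc_anti H)) as E; rewrite ocK in E; symmetry; exact E.
Qed.

Lemma sasaki_le a x : le (sasaki a x) a.
Proof. apply meet_l. Qed.

Lemma sasaki_mono a x y : le x y -> le (sasaki a x) (sasaki a y).
Proof. intros; apply meet_mono; [apply le_refl|apply join_mono; [apply le_refl|assumption]]. Qed.

Lemma sasaki_top a : sasaki a (otop M) = a.
Proof.
  apply le_antisym; [apply sasaki_le|].
  apply meet_ge; [apply le_refl|apply (le_trans (top_ge _)), join_r].
Qed.

Lemma le_join_sasaki a x : le x (ojoin (c a) (sasaki a x)).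
Proof.
  unfold sasaki; rewrite meet_comm. rewrite <- (ocK a) at 3.
  rewrite <- (oml (join_l (c a) x)); apply join_r.
Qed.

Lemma sasaki_le_iff a x b : le (sasaki a x) b <-> le x (ojoin (c a) (omeet a b)).
Proof.
  split; intros H.
  - apply (le_trans (le_join_sasaki a x)), join_mono; [apply le_refl|].
    apply meet_ge; [apply sasaki_le|exact H].
  - apply (le_trans (sasaki_mono a H)). unfold sasaki; rewrite join_idem_l.
    rewrite meet_oc_join; [apply meet_r|apply meet_l].
Qed.

Definition adjoint (f h : M -> M) : Prop := forall x y, le (f x) (c y) <-> le x (c (h y)).

Lemma sasaki_adjoint a : adjoint (sasaki a) (sasaki a).
Proof.
  intros x y. unfold sasaki at 2. rewrite oc_meet, oc_join, ocK. apply sasaki_le_iff.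
Qed.

Lemma adjoint_mono f h x y : adjoint f h -> le x y -> le (f x) (f y).
Proof.
  intros A H. rewrite <- (ocK (f y)). apply A, (le_trans H), A.
  rewrite ocK; apply le_refl.
Qed.

Lemma adjoint_sup f h (W : M -> Prop) : adjoint f h -> f (sup W) = sup (img f W).
Proof.
  intros A. apply le_antisym.
  - rewrite <- (ocK (sup (img f W))). apply A, sup_le. intros w Hw. apply A.
    rewrite ocK; apply sup_ub; exists w; auto.
  - apply sup_le. intros z (w & Hw & ->). apply (adjoint_mono A), sup_ub, Hw.
Qed.

Lemma adjoint_sym f h : adjoint f h -> adjoint h f.
Proof. intros A x y; split; intros H; apply le_oc_sym, A, le_oc_sym, H. Qed.

Lemma adjoint_unique f h1 h2 : adjoint f h1 -> adjoint f h2 -> forall y, h1 y = h2 y.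
Proof.
  intros A1 A2 y. apply oc_inj, le_antisym; [apply A2, A1|apply A1, A2]; apply le_refl.
Qed.

Lemma adjoint_comp f1 h1 f2 h2 :
  adjoint f1 h1 -> adjoint f2 h2 -> adjoint (fun x => f1 (f2 x)) (fun y => h2 (h1 y)).
Proof. intros A1 A2 x y. rewrite (A1 (f2 x) y). apply A2. Qed.

Lemma adjoint_sup_fam (I : Type) (P : I -> Prop) (f h : I -> M -> M) :
  (forall i, P i -> adjoint (f i) (h i)) ->
  adjoint (fun x => sup (fun z => exists i, P i /\ z = f i x))
          (fun y => sup (fun z => exists i, P i /\ z = h i y)).
Proof.
  intros A x y. rewrite le_oc_sup. split.
  - intros H s (i & Hi & ->). apply (A i Hi).
    eapply le_trans; [|exact H]. apply sup_ub; eauto.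
  - intros H. apply sup_le. intros z (i & Hi & ->). apply (A i Hi), H; eauto.
Qed.
End OrthomodularLattice.

Section LinearMaps.
Variable M : COLops.
Hypothesis HM : is_COL M.
Local Notation le := (ole M).
Local Notation c := (oc M).
Local Notation sup := (osup M).
Local Notation top := (otop M).
Implicit Types f h k : LinCar M.
Implicit Types A : LinCar M -> Prop.

Lemma lin_ext f h : (forall x, proj1_sig f x = proj1_sig h x) -> f = h.
Proof.
  destruct f as [f pf], h as [h ph]; simpl; intros H.
  assert (f = h) as <- by (apply functional_extensionality, H).
  f_equal; apply proof_irrelevance.
Qed.

Lemma liftL_val (u v : M -> M) : adjoint u v -> proj1_sig (liftL u) = u.
Proof.
  intros A; unfold liftL. destruct excluded_middle_informative as [p | N]; [reflexivity|].
  exfalso; apply N; exists v; exact A.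
Qed.

Definition adjL f : M -> M :=
  proj1_sig (constructive_indefinite_description _ (proj2_sig f)).

Lemma adjL_adjoint f : adjoint (proj1_sig f) (adjL f).
Proof. unfold adjL; destruct constructive_indefinite_description as [v A]; exact A. Qed.

Lemma Lin_jn_val (A : LinCar M -> Prop) :
  proj1_sig (Lin_jn A) = fun x => sup (fun z => exists f, A f /\ z = proj1_sig f x).
Proof.
  apply (liftL_val (v := fun y => sup (fun z => exists f, A f /\ z = adjL f y))).
  apply (adjoint_sup_fam HM (fun f _ => adjL_adjoint f)).
Qed.

Lemma Lin_mul_val f h : proj1_sig (Lin_mul f h) = fun x => proj1_sig f (proj1_sig h x).
Proof. apply (liftL_val (adjoint_comp (adjL_adjoint f) (adjL_adjoint h))). Qed.

Lemma Lin_st_val f : proj1_sig (Lin_st f) = adjL f.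
Proof. apply (liftL_val (adjoint_sym HM (adjL_adjoint f))). Qed.

Lemma Lin_st_adjoint f : adjoint (proj1_sig f) (proj1_sig (Lin_st f)).
Proof. rewrite Lin_st_val; apply adjL_adjoint. Qed.

Definition sasakiL (m : M) : LinCar M := liftL (sasaki m).

Lemma sasakiL_val m : proj1_sig (sasakiL m) = sasaki m.
Proof. apply (liftL_val (sasaki_adjoint HM m)). Qed.

Lemma sasakiL_top m : proj1_sig (sasakiL m) top = m.
Proof. rewrite sasakiL_val; apply (sasaki_top HM). Qed.

Lemma Lin_sim_def f : Lin_sim f = sasakiL (c (proj1_sig f top)).
Proof. reflexivity. Qed.

Lemma Lin_sim_sasakiL m : Lin_sim (sasakiL (c m)) = sasakiL m.
Proof. rewrite Lin_sim_def, sasakiL_top, (ocK HM); reflexivity. Qed.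

Lemma Lin_sim_val f : proj1_sig (Lin_sim f) = sasaki (c (proj1_sig f top)).
Proof. apply sasakiL_val. Qed.

Lemma Lin_sim_top f : proj1_sig (Lin_sim f) top = c (proj1_sig f top).
Proof. apply sasakiL_top. Qed.

Lemma Lin_sim_eq f h : proj1_sig f top = proj1_sig h top -> Lin_sim f = Lin_sim h.
Proof. intros E; rewrite !Lin_sim_def, E; reflexivity. Qed.

Lemma Lin_st_sasakiL m : Lin_st (sasakiL m) = sasakiL m.
Proof.
  apply lin_ext; intros y. rewrite Lin_st_val.
  pose proof (adjL_adjoint (sasakiL m)) as A; rewrite sasakiL_val in A.
  rewrite sasakiL_val; symmetry; exact (adjoint_unique HM (sasaki_adjoint HM m) A y).
Qed.

Lemma Lin_jn_pair_val f h x :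
  proj1_sig (Lin_jn (pair f h)) x = ojoin (proj1_sig f x) (proj1_sig h x).
Proof.
  rewrite Lin_jn_val. apply sup_ext; intros z; split.
  - intros (k & [-> | ->] & ->); [left|right]; reflexivity.
  - intros [-> | ->]; eexists; split; [left|reflexivity|right|reflexivity]; reflexivity.
Qed.

Lemma qle_Lin f h : qle (K := Lin M) f h <-> forall x, le (proj1_sig f x) (proj1_sig h x).
Proof.
  unfold qle; simpl. split.
  - intros H x. rewrite <- H, Lin_jn_pair_val. apply (join_l HM).
  - intros H. apply lin_ext; intros x. rewrite Lin_jn_pair_val. apply (le_join_eq HM), H.
Qed.

Lemma Lin_qle_refl f : qle (K := Lin M) f f.
Proof. apply qle_Lin; intros; apply (le_refl HM). Qed.

Lemma Lin_qle_antisym f h : qle (K := Lin M) f h -> qle (K := Lin M) h f -> f = h.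
Proof.
  intros H1 H2; apply lin_ext; intros x.
  apply (le_antisym HM); [apply (proj1 (qle_Lin f h))|apply (proj1 (qle_Lin h f))]; assumption.
Qed.

Lemma Lin_qle_trans f h k : qle (K := Lin M) f h -> qle (K := Lin M) h k -> qle (K := Lin M) f k.
Proof.
  intros H1 H2; apply qle_Lin; intros x.
  apply (le_trans HM (proj1 (qle_Lin f h) H1 x) (proj1 (qle_Lin h k) H2 x)).
Qed.

Lemma Lin_jn_lub A : is_lub (qle (K := Lin M)) A (Lin_jn A).
Proof.
  split.
  - intros f Hf; apply qle_Lin; intros x; simpl; rewrite Lin_jn_val. apply (sup_ub HM); eauto.
  - intros u Hu; apply qle_Lin; intros x; simpl; rewrite Lin_jn_val.
    apply (sup_le HM); intros z (f & Hf & ->). apply qle_Lin, Hu, Hf.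
Qed.

Lemma Lin_mulA f h k : Lin_mul f (Lin_mul h k) = Lin_mul (Lin_mul f h) k.
Proof. apply lin_ext; intros; simpl; rewrite !Lin_mul_val; reflexivity. Qed.

Lemma Lin_mul1l f : Lin_mul (idL M) f = f.
Proof. apply lin_ext; intros; simpl; rewrite Lin_mul_val; reflexivity. Qed.

Lemma Lin_mul1r f : Lin_mul f (idL M) = f.
Proof. apply lin_ext; intros; simpl; rewrite Lin_mul_val; reflexivity. Qed.

Lemma Lin_mul_jnr f A : Lin_mul f (Lin_jn A) = Lin_jn (img (Lin_mul f) A).
Proof.
  apply lin_ext; intros y; simpl. rewrite Lin_mul_val, !Lin_jn_val.
  rewrite (adjoint_sup HM _ (adjL_adjoint f)). apply sup_ext; intros z; split.
  - intros (w & (h & Hh & ->) & ->). exists (Lin_mul f h).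
    split; [exists h; auto|rewrite Lin_mul_val; reflexivity].
  - intros (k & (h & Hh & ->) & ->). exists (proj1_sig h y).
    split; [exists h; auto|rewrite Lin_mul_val; reflexivity].
Qed.

Lemma Lin_mul_jnl f A : Lin_mul (Lin_jn A) f = Lin_jn (img (fun g => Lin_mul g f) A).
Proof.
  apply lin_ext; intros y; simpl. rewrite Lin_mul_val, !Lin_jn_val.
  apply sup_ext; intros z; split.
  - intros (h & Hh & ->). exists (Lin_mul h f).
    split; [exists h; auto|rewrite Lin_mul_val; reflexivity].
  - intros (k & (h & Hh & ->) & ->). exists h. rewrite Lin_mul_val; auto.
Qed.

Lemma Lin_stK f : Lin_st (Lin_st f) = f.
Proof.
  apply lin_ext; intros y; simpl. rewrite Lin_st_val.
  apply (adjoint_unique HM (adjL_adjoint (Lin_st f)) (adjoint_sym HM (Lin_st_adjoint f))).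
Qed.

Lemma Lin_st_mul f h : Lin_st (Lin_mul f h) = Lin_mul (Lin_st h) (Lin_st f).
Proof.
  apply lin_ext; intros y; simpl. rewrite Lin_st_val, Lin_mul_val, !Lin_st_val.
  pose proof (adjL_adjoint (Lin_mul f h)) as A; rewrite Lin_mul_val in A.
  apply (adjoint_unique HM A (adjoint_comp (adjL_adjoint f) (adjL_adjoint h))).
Qed.

Lemma Lin_st_jn A : Lin_st (Lin_jn A) = Lin_jn (img (@Lin_st M) A).
Proof.
  apply lin_ext; intros y; simpl. rewrite Lin_st_val, !Lin_jn_val.
  pose proof (adjL_adjoint (Lin_jn A)) as B; rewrite Lin_jn_val in B.
  rewrite (adjoint_unique HM B (adjoint_sup_fam HM (fun f _ => adjL_adjoint f))).
  apply sup_ext; intros z; split.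
  - intros (f & Hf & ->). exists (Lin_st f).
    split; [exists f; auto|rewrite Lin_st_val; reflexivity].
  - intros (h & (f & Hf & ->) & ->). exists f. rewrite Lin_st_val; auto.
Qed.

Lemma Lin_sim_mul_simsim f h : Lin_sim (Lin_mul f (Lin_sim (Lin_sim h))) = Lin_sim (Lin_mul f h).
Proof.
  apply Lin_sim_eq. rewrite !Lin_mul_val, !Lin_sim_top, (ocK HM); reflexivity.
Qed.

Lemma Lin_sim_jn_simsim A :
  Lin_sim (Lin_jn (img (fun g => Lin_sim (Lin_sim g)) A)) = Lin_sim (Lin_jn A).
Proof.
  apply Lin_sim_eq; rewrite !Lin_jn_val. apply sup_ext; intros z; split.
  - intros (h & (f & Hf & ->) & ->). exists f. rewrite !Lin_sim_top, (ocK HM); auto.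
  - intros (f & Hf & ->). exists (Lin_sim (Lin_sim f)).
    rewrite !Lin_sim_top, (ocK HM); split; [exists f|]; auto.
Qed.

Lemma Lin_st_sim f : Lin_st (Lin_sim f) = Lin_sim f.
Proof. apply Lin_st_sasakiL. Qed.

Lemma Lin_simsim_mul f h :
  Lin_sim (Lin_sim (Lin_mul (Lin_sim (Lin_sim f)) h))
  = Lin_sim (Lin_jn (pair (Lin_sim f) (Lin_sim (Lin_jn (pair (Lin_sim f) h))))).
Proof.
  apply Lin_sim_eq.
  rewrite Lin_sim_top, Lin_mul_val, !Lin_jn_pair_val, !Lin_sim_top, Lin_jn_pair_val, Lin_sim_top.
  rewrite Lin_sim_val, Lin_sim_top, (ocK HM). unfold sasaki, omeet; rewrite (ocK HM).
  reflexivity.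
Qed.

Lemma Lin_IDA : is_IDA (Lin M).
Proof.
  exact (conj Lin_qle_refl (conj Lin_qle_antisym (conj Lin_qle_trans (conj Lin_jn_lub
    (conj Lin_mulA (conj Lin_mul1l (conj Lin_mul1r (conj Lin_mul_jnr (conj Lin_mul_jnl
    (conj Lin_stK (conj Lin_st_mul (conj Lin_st_jn
    (conj Lin_sim_mul_simsim (conj Lin_sim_jn_simsim (conj Lin_st_sim Lin_simsim_mul))))))))))))))).
Qed.
End LinearMaps.

Lemma is_COL_transport (M N : COLops) (HM : is_COL M) (D : N -> M) (E : M -> N) :
  (forall m, D (E m) = m) -> (forall k, E (D k) = k) ->
  (forall a b, ole N a b <-> ole M (D a) (D b)) ->
  (forall a, D (oc N a) = oc M (D a)) ->
  (forall W, D (osup N W) = osup M (img D W)) -> is_COL N.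
Proof.
  intros DE ED Dle Doc Dsup.
  assert (Dinj : forall a b, D a = D b -> a = b) by (intros a b H; rewrite <- (ED a), H, ED; auto).
  assert (Djoin : forall a b, D (ojoin a b) = ojoin (D a) (D b)).
  { intros a b; unfold ojoin; rewrite Dsup; apply sup_ext; intros z; split.
    - intros (w & [-> | ->] & ->); [left|right]; reflexivity.
    - intros [-> | ->]; eexists; split; [left|reflexivity|right|reflexivity]; reflexivity. }
  assert (Dtop : D (otop N) = otop M).
  { unfold otop; rewrite Dsup; apply sup_ext; intros z; split; [trivial|].
    intros _; exists (E z); auto. }
  destruct HM as (H1 & H2 & H3 & H4 & H5 & H6 & H7 & H8).
  split; [|split; [|split; [|split; [|split; [|split; [|split]]]]]].
  - intros a; apply Dle, H1.
  - intros a b Ha Hb; apply Dinj, H2; apply Dle; assumption.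
  - intros a b d Ha Hb; apply Dle; eapply H3; apply Dle; eassumption.
  - intros W; split.
    + intros w Hw; apply Dle; rewrite Dsup; apply (H4 (img D W)); exists w; auto.
    + intros u Hu; apply Dle; rewrite Dsup; apply (H4 (img D W)).
      intros z (w & Hw & ->); apply Dle, Hu, Hw.
  - intros a b H; apply Dle; rewrite !Doc; apply H5, Dle, H.
  - intros a; apply Dinj; rewrite !Doc; apply H6.
  - intros a; apply Dinj; rewrite Djoin, Doc, Dtop; apply H7.
  - intros a b H; apply Dinj. unfold omeet; rewrite Djoin, !Doc, Djoin, !Doc.
    apply H8, Dle, H.
Qed.

Definition pi_submonoid (M : COLops) (L : LinCar M -> Prop) : Prop :=
  L (idL M) /\ (forall a b, L a -> L b -> L (Lin_mul a b)) /\
  (forall a, L a -> L (Lin_st a)) /\ (forall m, L (sasakiL m)).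

Section PowerSet.
Variable M : COLops.
Hypothesis HM : is_COL M.
Local Notation le := (ole M).
Local Notation c := (oc M).
Local Notation sup := (osup M).
Local Notation top := (otop M).
Variable L : LinCar M -> Prop.
Hypothesis HL : pi_submonoid L.
Implicit Types A B X Y : PCar L.
Implicit Types a b f h : LinCar M.
Implicit Types AA : PCar L -> Prop.

Let L_id : L (idL M) := proj1 HL.
Let L_mul : forall a b, L a -> L b -> L (Lin_mul a b) := proj1 (proj2 HL).
Let L_st : forall a, L a -> L (Lin_st a) := proj1 (proj2 (proj2 HL)).
Let L_sasakiL : forall m, L (sasakiL m) := proj2 (proj2 (proj2 HL)).

Lemma Pset_ext A B : (forall f, proj1_sig A f <-> proj1_sig B f) -> A = B.
Proof.
  destruct A as [A pA], B as [B pB]; simpl; intros H.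
  assert (A = B) as <- by (apply pred_ext, H).
  f_equal; apply proof_irrelevance.
Qed.

Lemma Pset_sub A a : proj1_sig A a -> L a.
Proof. apply (proj2_sig A). Qed.

(* The only datum of [A] that [P_sim] retains. *)
Definition Psupp A : M := sup (fun z => exists a, proj1_sig A a /\ z = proj1_sig a top).

Definition Pset1 f : PCar L := P_mk L (fun a => a = f).

Lemma P_sim_Pset1 A : P_sim A = Pset1 (sasakiL (c (Psupp A))).
Proof. reflexivity. Qed.

Lemma P_sim_eq A B : Psupp A = Psupp B -> P_sim A = P_sim B.
Proof. intros E; rewrite !P_sim_Pset1, E; reflexivity. Qed.

Lemma mem_Pset1 f a : L f -> (proj1_sig (Pset1 f) a <-> a = f).
Proof. intros Hf; simpl; split; [intros [_ H]; exact H|intros ->; auto]. Qed.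

Lemma mem_P_mul A B d :
  proj1_sig (P_mul A B) d <-> exists a b, proj1_sig A a /\ proj1_sig B b /\ d = Lin_mul a b.
Proof.
  simpl; split; [intros [_ H]; exact H|].
  intros (a & b & Ha & Hb & ->); split; [apply L_mul; eapply Pset_sub; eauto|eauto].
Qed.

Lemma mem_P_st A d : proj1_sig (P_st A) d <-> exists a, proj1_sig A a /\ d = Lin_st a.
Proof.
  simpl; split; [intros [_ H]; exact H|].
  intros (a & Ha & ->); split; [apply L_st; eapply Pset_sub; eauto|eauto].
Qed.

Lemma mem_P_un d : proj1_sig (P_un L) d <-> d = idL M.
Proof. apply mem_Pset1, L_id. Qed.

Lemma mem_P_sim A d : proj1_sig (P_sim A) d <-> d = sasakiL (c (Psupp A)).
Proof. apply mem_Pset1, L_sasakiL. Qed.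

Lemma Psupp_Pset1 f : L f -> Psupp (Pset1 f) = proj1_sig f top.
Proof.
  intros Hf; apply (sup_attained HM).
  - exists f; split; [apply mem_Pset1|]; auto.
  - intros z (a & Ha & ->). apply mem_Pset1 in Ha; [subst; apply (le_refl HM)|exact Hf].
Qed.

Lemma Psupp_P_sim A : Psupp (P_sim A) = c (Psupp A).
Proof. rewrite P_sim_Pset1, Psupp_Pset1 by apply L_sasakiL; apply (sasakiL_top HM). Qed.

Lemma P_simsim A : P_sim (P_sim A) = Pset1 (sasakiL (Psupp A)).
Proof. rewrite (P_sim_Pset1 (P_sim A)), Psupp_P_sim, (ocK HM); reflexivity. Qed.

Lemma Pset1_sasakiL_inj m n : Pset1 (sasakiL m) = Pset1 (sasakiL n) -> m = n.
Proof.
  intros H. rewrite <- (sasakiL_top HM m), <- (sasakiL_top HM n), <- !Psupp_Pset1, H by auto.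
  reflexivity.
Qed.

Lemma Psupp_P_jn AA : Psupp (P_jn AA) = sup (fun z => exists A, AA A /\ z = Psupp A).
Proof.
  apply (le_antisym HM).
  - apply (sup_le HM); intros z (a & (A & HA & Ha) & ->).
    apply (le_trans HM) with (Psupp A); apply (sup_ub HM); eauto.
  - apply (sup_le HM); intros z (A & HA & ->). apply (sup_le HM); intros z (a & Ha & ->).
    apply (sup_ub HM); exists a; split; [exists A|]; auto.
Qed.

Lemma Psupp_P_jn_pair A B : Psupp (P_jn (pair A B)) = ojoin (Psupp A) (Psupp B).
Proof.
  rewrite Psupp_P_jn; apply sup_ext; intros z; split.
  - intros (X & [-> | ->] & ->); [left|right]; reflexivity.
  - intros [-> | ->]; eexists; split; [left|reflexivity|right|reflexivity]; reflexivity.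
Qed.

Lemma Psupp_P_mul A B :
  Psupp (P_mul A B) = sup (fun z => exists a, proj1_sig A a /\ z = proj1_sig a (Psupp B)).
Proof.
  apply (le_antisym HM).
  - apply (sup_le HM); intros z (d & Hd & ->). apply mem_P_mul in Hd.
    destruct Hd as (a & b & Ha & Hb & ->). rewrite Lin_mul_val.
    apply (le_trans HM) with (proj1_sig a (Psupp B)); [|apply (sup_ub HM); eauto].
    apply (adjoint_mono HM (adjL_adjoint a)), (sup_ub HM); eauto.
  - apply (sup_le HM); intros z (a & Ha & ->). unfold Psupp at 1.
    rewrite (adjoint_sup HM _ (adjL_adjoint a)).
    apply (sup_le HM); intros z (w & (b & Hb & ->) & ->). apply (sup_ub HM).
    exists (Lin_mul a b); split; [apply mem_P_mul; eauto 6|rewrite Lin_mul_val; reflexivity].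
Qed.

Lemma Psupp_P_mul_Pset1 f B : L f -> Psupp (P_mul (Pset1 f) B) = proj1_sig f (Psupp B).
Proof.
  intros Hf; rewrite Psupp_P_mul. apply (sup_attained HM).
  - exists f; split; [apply mem_Pset1|]; auto.
  - intros z (a & Ha & ->). apply mem_Pset1 in Ha; [subst; apply (le_refl HM)|exact Hf].
Qed.

Lemma qle_Pset A B : qle (K := Pset L) A B <-> forall a, proj1_sig A a -> proj1_sig B a.
Proof.
  unfold qle; split.
  - intros H a Ha. rewrite <- H. exists A; split; [left|]; auto.
  - intros H. apply Pset_ext; intros a; split.
    + intros (X & [-> | ->] & Hx); auto.
    + intros Ha; exists B; split; [right|]; auto.
Qed.

Lemma Pset_qle_refl A : qle (K := Pset L) A A.
Proof. apply qle_Pset; auto. Qed.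

Lemma Pset_qle_antisym A B : qle (K := Pset L) A B -> qle (K := Pset L) B A -> A = B.
Proof.
  intros H1 H2; apply Pset_ext; intros a; split; [apply (qle_Pset A B)|apply (qle_Pset B A)];
    assumption.
Qed.

Lemma Pset_qle_trans A B X :
  qle (K := Pset L) A B -> qle (K := Pset L) B X -> qle (K := Pset L) A X.
Proof.
  intros H1 H2; apply qle_Pset; intros a Ha. apply (qle_Pset B X), (qle_Pset A B); auto.
Qed.

Lemma Pset_jn_lub AA : is_lub (qle (K := Pset L)) AA (P_jn AA).
Proof.
  split.
  - intros A HA; apply qle_Pset; intros a Ha; exists A; auto.
  - intros U HU; apply qle_Pset; intros a (X & HX & Ha). apply (qle_Pset X U); auto.
Qed.

Lemma Pset_mulA A B X : P_mul A (P_mul B X) = P_mul (P_mul A B) X.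
Proof.
  apply Pset_ext; intros d; rewrite !mem_P_mul; split.
  - intros (a & e & Ha & He & ->). apply mem_P_mul in He. destruct He as (b & f & Hb & Hf & ->).
    exists (Lin_mul a b), f. rewrite mem_P_mul. split; eauto 6. split; [exact Hf|apply Lin_mulA].
  - intros (e & f & He & Hf & ->). apply mem_P_mul in He. destruct He as (a & b & Ha & Hb & ->).
    exists a, (Lin_mul b f). rewrite mem_P_mul. split; eauto 7. split; eauto 6.
    symmetry; apply Lin_mulA.
Qed.

Lemma Pset_mul1l A : P_mul (P_un L) A = A.
Proof.
  apply Pset_ext; intros d; rewrite mem_P_mul; split.
  - intros (a & b & Ha & Hb & ->). apply mem_P_un in Ha; subst. rewrite (Lin_mul1l b); exact Hb.
  - intros Hd. exists (idL M), d. rewrite (Lin_mul1l d), mem_P_un; auto.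
Qed.

Lemma Pset_mul1r A : P_mul A (P_un L) = A.
Proof.
  apply Pset_ext; intros d; rewrite mem_P_mul; split.
  - intros (a & b & Ha & Hb & ->). apply mem_P_un in Hb; subst. rewrite (Lin_mul1r a); exact Ha.
  - intros Hd. exists d, (idL M). rewrite (Lin_mul1r d), mem_P_un; auto.
Qed.

Lemma Pset_mul_jnr A AA : P_mul A (P_jn AA) = P_jn (img (P_mul A) AA).
Proof.
  apply Pset_ext; intros d; rewrite mem_P_mul; split.
  - intros (a & b & Ha & (X & HX & Hb) & ->). exists (P_mul A X).
    split; [exists X; auto|apply mem_P_mul; eauto].
  - intros (Y & (X & HX & ->) & Hd). apply mem_P_mul in Hd.
    destruct Hd as (a & b & Ha & Hb & ->).
    exists a, b; split; [exact Ha|split; [exists X; auto|reflexivity]].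
Qed.

Lemma Pset_mul_jnl A AA : P_mul (P_jn AA) A = P_jn (img (fun X => P_mul X A) AA).
Proof.
  apply Pset_ext; intros d; rewrite mem_P_mul; split.
  - intros (a & b & (X & HX & Ha) & Hb & ->). exists (P_mul X A).
    split; [exists X; auto|apply mem_P_mul; eauto].
  - intros (Y & (X & HX & ->) & Hd). apply mem_P_mul in Hd.
    destruct Hd as (a & b & Ha & Hb & ->).
    exists a, b; split; [exists X; auto|split; [exact Hb|reflexivity]].
Qed.

Lemma Pset_stK A : P_st (P_st A) = A.
Proof.
  apply Pset_ext; intros d; rewrite mem_P_st; split.
  - intros (a & Ha & ->). apply mem_P_st in Ha. destruct Ha as (b & Hb & ->).
    rewrite (Lin_stK HM b); exact Hb.
  - intros Hd. exists (Lin_st d). rewrite (Lin_stK HM d), mem_P_st; eauto.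
Qed.

Lemma Pset_st_mul A B : P_st (P_mul A B) = P_mul (P_st B) (P_st A).
Proof.
  apply Pset_ext; intros d; rewrite mem_P_st, mem_P_mul; split.
  - intros (e & He & ->). apply mem_P_mul in He. destruct He as (a & b & Ha & Hb & ->).
    exists (Lin_st b), (Lin_st a). rewrite !mem_P_st. split; eauto. split; eauto.
    apply (Lin_st_mul HM).
  - intros (p & q & Hp & Hq & ->). apply mem_P_st in Hp; apply mem_P_st in Hq.
    destruct Hp as (b & Hb & ->), Hq as (a & Ha & ->). exists (Lin_mul a b).
    rewrite mem_P_mul. split; eauto 6. symmetry; apply (Lin_st_mul HM).
Qed.

Lemma Pset_st_jn AA : P_st (P_jn AA) = P_jn (img (@P_st M L) AA).
Proof.
  apply Pset_ext; intros d; rewrite mem_P_st; split.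
  - intros (a & (X & HX & Ha) & ->). exists (P_st X).
    split; [exists X; auto|apply mem_P_st; eauto].
  - intros (Y & (X & HX & ->) & Hd). apply mem_P_st in Hd.
    destruct Hd as (a & Ha & ->). exists a; split; [exists X; auto|reflexivity].
Qed.

Lemma Pset_sim_mul_simsim A B : P_sim (P_mul A (P_sim (P_sim B))) = P_sim (P_mul A B).
Proof. apply P_sim_eq; rewrite !Psupp_P_mul, !Psupp_P_sim, (ocK HM); reflexivity. Qed.

Lemma Pset_sim_jn_simsim AA :
  P_sim (P_jn (img (fun X => P_sim (P_sim X)) AA)) = P_sim (P_jn AA).
Proof.
  apply P_sim_eq; rewrite !Psupp_P_jn. apply sup_ext; intros z; split.
  - intros (Y & (X & HX & ->) & ->). exists X. rewrite !Psupp_P_sim, (ocK HM); auto.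
  - intros (X & HX & ->). exists (P_sim (P_sim X)).
    rewrite !Psupp_P_sim, (ocK HM); split; [exists X|]; auto.
Qed.

Lemma Pset_st_sim A : P_st (P_sim A) = P_sim A.
Proof.
  apply Pset_ext; intros d; rewrite mem_P_st, mem_P_sim; split.
  - intros (a & Ha & ->). apply mem_P_sim in Ha; subst. apply (Lin_st_sasakiL HM).
  - intros ->. exists (sasakiL (c (Psupp A))). rewrite (Lin_st_sasakiL HM), mem_P_sim; auto.
Qed.

Lemma Pset_simsim_mul A B :
  P_sim (P_sim (P_mul (P_sim (P_sim A)) B))
  = P_sim (P_jn (pair (P_sim A) (P_sim (P_jn (pair (P_sim A) B))))).
Proof.
  apply P_sim_eq.
  rewrite Psupp_P_sim, P_simsim, Psupp_P_mul_Pset1, (sasakiL_val HM) by apply L_sasakiL.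
  rewrite Psupp_P_jn_pair, !Psupp_P_sim, Psupp_P_jn_pair, Psupp_P_sim.
  unfold sasaki, omeet; rewrite (ocK HM); reflexivity.
Qed.

Lemma Pset_IDA : is_IDA (Pset L).
Proof.
  exact (conj Pset_qle_refl (conj Pset_qle_antisym (conj Pset_qle_trans (conj Pset_jn_lub
    (conj Pset_mulA (conj Pset_mul1l (conj Pset_mul1r (conj Pset_mul_jnr (conj Pset_mul_jnl
    (conj Pset_stK (conj Pset_st_mul (conj Pset_st_jn
    (conj Pset_sim_mul_simsim (conj Pset_sim_jn_simsim
    (conj Pset_st_sim Pset_simsim_mul))))))))))))))).
Qed.

Definition test_supp (k : TildeCar (Pset L)) : M := Psupp (proj1_sig k).

(* [tmk] applies [~], so the underlying set of [test_of m] is [Pset1 (sasakiL m)]. *)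
Definition test_of (m : M) : TildeCar (Pset L) := tmk (K := Pset L) (Pset1 (sasakiL (c m))).

Lemma test_ext (k l : TildeCar (Pset L)) : proj1_sig k = proj1_sig l -> k = l.
Proof. destruct k as [x px], l as [y py]; simpl; intros <-; f_equal; apply proof_irrelevance. Qed.

Lemma test_Pset1 k : proj1_sig k = Pset1 (sasakiL (test_supp k)).
Proof. destruct k as [x [l ->]]; unfold test_supp; simpl; rewrite Psupp_P_sim; reflexivity. Qed.

Lemma test_ofK m : test_supp (test_of m) = m.
Proof.
  unfold test_supp, test_of; simpl.
  rewrite Psupp_P_sim, Psupp_Pset1, (sasakiL_top HM), (ocK HM) by apply L_sasakiL; reflexivity.
Qed.

Lemma test_suppK k : test_of (test_supp k) = k.
Proof.
  apply test_ext; rewrite (test_Pset1 k); unfold test_of; simpl.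
  rewrite P_sim_Pset1, Psupp_Pset1, (sasakiL_top HM), (ocK HM) by apply L_sasakiL; reflexivity.
Qed.

Lemma test_supp_le k l : t_le k l <-> le (test_supp k) (test_supp l).
Proof.
  change (P_sim (P_sim (P_jn (pair (proj1_sig k) (proj1_sig l)))) = proj1_sig l
          <-> le (test_supp k) (test_supp l)).
  rewrite P_simsim, Psupp_P_jn_pair; fold (test_supp k) (test_supp l).
  rewrite (test_Pset1 l), (le_join_eq HM); split.
  - apply Pset1_sasakiL_inj.
  - intros ->; reflexivity.
Qed.

Lemma test_supp_oc k : test_supp (t_oc k) = c (test_supp k).
Proof. apply Psupp_P_sim. Qed.

Lemma test_supp_sup W : test_supp (t_sup W) = sup (img test_supp W).
Proof.
  set (s := sup (img test_supp W)).
  assert (Hs : is_lub (t_le (K := Pset L)) W (test_of s)).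
  { split.
    - intros w Hw; apply test_supp_le; rewrite test_ofK. apply (sup_ub HM); exists w; auto.
    - intros u Hu; apply test_supp_le; rewrite test_ofK.
      apply (sup_le HM); intros z (w & Hw & ->); apply test_supp_le, Hu, Hw. }
  assert (Hsup : is_lub (t_le (K := Pset L)) W (t_sup W))
    by (unfold t_sup; apply epsilon_spec; eauto).
  apply (le_antisym HM).
  - rewrite <- (test_ofK s). apply test_supp_le, (proj2 Hsup), Hs.
  - apply (sup_le HM); intros z (w & Hw & ->). apply test_supp_le, (proj1 Hsup), Hw.
Qed.

Lemma tilde_Pset_COL : is_COL (tilde_ops (Pset L)).
Proof.
  apply (is_COL_transport HM (N := tilde_ops (Pset L)) test_ofK test_suppK);
    [apply test_supp_le|apply test_supp_oc|apply test_supp_sup].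
Qed.

Lemma P_jn_Pset1 X : X = P_jn (fun Y => exists f, proj1_sig X f /\ Y = Pset1 f).
Proof.
  apply Pset_ext; intros a; split.
  - intros Ha. exists (Pset1 a); split; [exists a; auto|apply mem_Pset1; eauto using Pset_sub].
  - intros (Y & (f & Hf & ->) & Ha).
    apply mem_Pset1 in Ha; [subst; exact Hf|eapply Pset_sub; eauto].
Qed.

Lemma Pset1_ind (P : PCar L -> Prop) :
  (forall f, L f -> P (Pset1 f)) -> (forall AA, (forall X, AA X -> P X) -> P (P_jn AA)) ->
  forall X, P X.
Proof.
  intros H1 Hjn X. rewrite (P_jn_Pset1 X). apply Hjn. intros Y (f & Hf & ->).
  apply H1; eapply Pset_sub; eauto.
Qed.

Lemma P_jn_Pset1_sub AA BB :
  (forall X, AA X -> exists f, L f /\ X = Pset1 f) ->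
  (forall X, BB X -> exists f, L f /\ X = Pset1 f) ->
  P_jn AA = P_jn BB -> forall X, AA X -> BB X.
Proof.
  intros HA HB E X HX. destruct (HA X HX) as (f & Hf & ->).
  assert (Hin : proj1_sig (P_jn BB) f).
  { rewrite <- E. exists (Pset1 f); split; [exact HX|apply mem_Pset1; auto]. }
  destruct Hin as (Y & HY & Hy). destruct (HB Y HY) as (h & Hh & ->).
  apply mem_Pset1 in Hy; [subst; exact HY|exact Hh].
Qed.

(* Tested against [test_of m], [Pset1 f] returns the value of [f] at [m]. *)
Lemma Pset1_equivk_inj f h : L f -> L h -> equivk (K := Pset L) (Pset1 f) (Pset1 h) -> f = h.
Proof.
  intros Hf Hh E. apply lin_ext; intros m.
  pose proof (E (test_of m)) as Em.
  change (P_sim (P_sim (P_mul (Pset1 f) (proj1_sig (test_of m))))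
          = P_sim (P_sim (P_mul (Pset1 h) (proj1_sig (test_of m))))) in Em.
  rewrite !P_simsim, !Psupp_P_mul_Pset1 in Em by assumption.
  fold (test_supp (test_of m)) in Em; rewrite test_ofK in Em.
  exact (Pset1_sasakiL_inj Em).
Qed.
End PowerSet.

Definition Lin_conj (M N : COLops) (g : M -> N) (g' : N -> M) (a : LinCar M) : LinCar N :=
  liftL (fun y => g (proj1_sig a (g' y))).

Lemma COL_iso_sym (M N : COLops) (g : M -> N) (g' : N -> M) : COL_iso g g' -> COL_iso g' g.
Proof.
  intros (K & K' & Hle & Hoc); split; [exact K'|split; [exact K|split]].
  - intros m n; rewrite Hle, !K'; reflexivity.
  - intros n; rewrite <- (K (oc M (g' n))), Hoc, K'; reflexivity.
Qed.

Section OrthoIsomorphism.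
Variables M N : COLops.
Variable g : M -> N.
Variable g' : N -> M.
Hypothesis Hg : COL_iso g g'.

Lemma isoK x : g' (g x) = x.
Proof. apply Hg. Qed.

Lemma isoVK y : g (g' y) = y.
Proof. apply Hg. Qed.

Lemma iso_le m n : ole M m n <-> ole N (g m) (g n).
Proof. apply Hg. Qed.

Lemma iso_oc m : g (oc M m) = oc N (g m).
Proof. apply Hg. Qed.

Lemma Lin_conj_adjoint a :
  adjoint (fun y => g (proj1_sig a (g' y))) (fun y => g (adjL a (g' y))).
Proof.
  intros x y.
  assert (Hoc' : g' (oc N y) = oc M (g' y)) by apply (COL_iso_sym Hg).
  rewrite <- (isoVK (oc N y)), Hoc', <- (iso_le (proj1_sig a (g' x))).
  rewrite (adjL_adjoint a (g' x) (g' y)).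
  rewrite (iso_le (g' x)), isoVK, iso_oc.
  reflexivity.
Qed.

Lemma Lin_conj_val a : proj1_sig (Lin_conj g g' a) = fun y => g (proj1_sig a (g' y)).
Proof. apply (liftL_val (Lin_conj_adjoint a)). Qed.

Lemma mem_conjset (A : LinCar M -> Prop) b :
  conjset g g' A b <-> exists a, A a /\ b = Lin_conj g g' a.
Proof.
  split; intros (a & Ha & Hb); exists a; split; auto.
  - apply lin_ext; intros y; rewrite Lin_conj_val, Hb; reflexivity.
  - rewrite Hb, Lin_conj_val; reflexivity.
Qed.

Hypothesis HM : is_COL M.
Hypothesis HN : is_COL N.

Lemma iso_sup (W : M -> Prop) : g (osup M W) = osup N (img g W).
Proof.
  apply (le_antisym HN).
  - rewrite <- (isoVK (osup N (img g W))). apply iso_le, (sup_le HM); intros w Hw.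
    apply iso_le; rewrite isoVK. apply (sup_ub HN); exists w; auto.
  - apply (sup_le HN); intros z (w & Hw & ->). apply iso_le, (sup_ub HM), Hw.
Qed.

Lemma iso_join a b : g (ojoin a b) = ojoin (g a) (g b).
Proof.
  unfold ojoin; rewrite iso_sup; apply sup_ext; intros z; split.
  - intros (w & [-> | ->] & ->); [left|right]; reflexivity.
  - intros [-> | ->]; eexists; split; [left|reflexivity|right|reflexivity]; reflexivity.
Qed.

Lemma iso_sasaki m x : g (sasaki m x) = sasaki (g m) (g x).
Proof. unfold sasaki, omeet; rewrite iso_oc, iso_join, !iso_oc, iso_join, iso_oc; reflexivity. Qed.

Lemma iso_inv_top : g' (otop N) = otop M.
Proof.
  apply (le_antisym HM); [apply (top_ge HM)|]. apply iso_le; rewrite isoVK; apply (top_ge HN).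
Qed.

Lemma Lin_conj_sasakiL m : Lin_conj g g' (sasakiL m) = sasakiL (g m).
Proof.
  apply lin_ext; intros y.
  rewrite Lin_conj_val, (sasakiL_val HM), (sasakiL_val HN), iso_sasaki, isoVK; reflexivity.
Qed.

Lemma Lin_conj_hom : IDA_hom (K := Lin M) (L := Lin N) (Lin_conj g g').
Proof.
  split; [|split; [|split; [|split]]]; simpl.
  - intros A; apply lin_ext; intros y.
    rewrite Lin_conj_val, (Lin_jn_val HM), (Lin_jn_val HN), iso_sup.
    apply sup_ext; intros z; split.
    + intros (w & (f & Hf & ->) & ->). exists (Lin_conj g g' f).
      rewrite Lin_conj_val; split; [exists f|]; auto.
    + intros (h & (f & Hf & ->) & ->). exists (proj1_sig f (g' y)).
      rewrite Lin_conj_val; split; [exists f|]; auto.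
  - intros a b; apply lin_ext; intros y. rewrite Lin_conj_val, !Lin_mul_val, !Lin_conj_val, isoK.
    reflexivity.
  - intros a; apply lin_ext; intros y. rewrite Lin_conj_val, !(Lin_st_val HM), (Lin_st_val HN).
    pose proof (adjL_adjoint (Lin_conj g g' a)) as A; rewrite Lin_conj_val in A.
    exact (adjoint_unique HN (Lin_conj_adjoint a) A y).
  - apply lin_ext; intros y; rewrite Lin_conj_val; apply isoVK.
  - intros a; rewrite !Lin_sim_def, Lin_conj_sasakiL, Lin_conj_val, iso_inv_top, iso_oc.
    reflexivity.
Qed.
End OrthoIsomorphism.

Lemma Lin_conjK (M N : COLops) (g : M -> N) (g' : N -> M) (Hg : COL_iso g g') b :
  Lin_conj g g' (Lin_conj g' g b) = b.
Proof.
  apply lin_ext; intros y. rewrite (Lin_conj_val Hg), (Lin_conj_val (COL_iso_sym Hg)), !(isoVK Hg).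
  reflexivity.
Qed.

Definition Pset_conj (M N : COLops) (L : LinCar M -> Prop) (L' : LinCar N -> Prop)
  (g : M -> N) (g' : N -> M) (A : PCar L) : PCar L' := P_mk L' (conjset g g' (proj1_sig A)).

Section ConjugatePowerSet.
Variables M N : COLops.
Hypothesis HM : is_COL M.
Hypothesis HN : is_COL N.
Variable g : M -> N.
Variable g' : N -> M.
Hypothesis Hg : COL_iso g g'.
Variable L : LinCar M -> Prop.
Variable L' : LinCar N -> Prop.
Hypothesis HL : pi_submonoid L.
Hypothesis HL' : pi_submonoid L'.
Hypothesis conj_L : forall a, L a -> L' (Lin_conj g g' a).
Local Notation F := (Pset_conj L' g g').
Implicit Types A B : PCar L.

Lemma mem_Pset_conj A b : proj1_sig (F A) b <-> exists a, proj1_sig A a /\ b = Lin_conj g g' a.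
Proof.
  unfold Pset_conj; simpl; rewrite (mem_conjset Hg); split; [intros [_ H]; exact H|].
  intros (a & Ha & ->); split; [apply conj_L; eapply Pset_sub; eauto|eauto].
Qed.

Lemma Pset_conj_val A : proj1_sig (F A) = conjset g g' (proj1_sig A).
Proof. apply pred_ext; intros b; rewrite mem_Pset_conj, (mem_conjset Hg); reflexivity. Qed.

Lemma Psupp_Pset_conj A : Psupp (F A) = g (Psupp A).
Proof.
  unfold Psupp; rewrite (iso_sup Hg HM HN); apply sup_ext; intros z; split.
  - intros (b & Hb & ->). apply mem_Pset_conj in Hb; destruct Hb as (a & Ha & ->).
    exists (proj1_sig a (otop M)); split; [exists a; auto|].
    rewrite (Lin_conj_val Hg), (iso_inv_top Hg HM HN); reflexivity.
  - intros (w & (a & Ha & ->) & ->). exists (Lin_conj g g' a).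
    split; [apply mem_Pset_conj; eauto|].
    rewrite (Lin_conj_val Hg), (iso_inv_top Hg HM HN); reflexivity.
Qed.

Lemma Pset_conj_hom : IDA_hom (K := Pset L) (L := Pset L') F.
Proof.
  destruct (Lin_conj_hom Hg HM HN) as (Cjn & Cmul & Cst & Cun & Csim).
  split; [|split; [|split; [|split]]]; simpl.
  - intros AA; apply Pset_ext; intros b. rewrite mem_Pset_conj; split.
    + intros (a & (X & HX & Ha) & ->).
      exists (F X); split; [exists X; auto|apply mem_Pset_conj; eauto].
    + intros (Y & (X & HX & ->) & Hb). apply mem_Pset_conj in Hb; destruct Hb as (a & Ha & ->).
      exists a; split; [exists X; auto|reflexivity].
  - intros A B; apply Pset_ext; intros b. rewrite mem_Pset_conj, (mem_P_mul HL'); split.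
    + intros (d & Hd & ->). apply (mem_P_mul HL) in Hd; destruct Hd as (a & e & Ha & He & ->).
      exists (Lin_conj g g' a), (Lin_conj g g' e).
      rewrite !mem_Pset_conj; split; [eauto|split; [eauto|apply Cmul]].
    + intros (p & q & Hp & Hq & ->). apply mem_Pset_conj in Hp, Hq.
      destruct Hp as (a & Ha & ->), Hq as (e & He & ->). exists (Lin_mul a e).
      rewrite (mem_P_mul HL); split; [eauto 6|symmetry; apply Cmul].
  - intros A; apply Pset_ext; intros b. rewrite mem_Pset_conj, (mem_P_st HL'); split.
    + intros (d & Hd & ->). apply (mem_P_st HL) in Hd; destruct Hd as (a & Ha & ->).
      exists (Lin_conj g g' a); rewrite mem_Pset_conj; split; [eauto|apply Cst].
    + intros (p & Hp & ->). apply mem_Pset_conj in Hp; destruct Hp as (a & Ha & ->).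
      exists (Lin_st a); rewrite (mem_P_st HL); split; [eauto|symmetry; apply Cst].
  - apply Pset_ext; intros b. rewrite mem_Pset_conj, (mem_P_un HL'); split.
    + intros (d & Hd & ->). apply (mem_P_un HL) in Hd; subst; exact Cun.
    + intros ->. exists (idL M); rewrite (mem_P_un HL); split; [reflexivity|symmetry; exact Cun].
  - intros A; apply Pset_ext; intros b. rewrite mem_Pset_conj, (mem_P_sim HL'), Psupp_Pset_conj.
    rewrite <- (iso_oc Hg), <- (Lin_conj_sasakiL Hg HM HN); split.
    + intros (d & Hd & ->). apply (mem_P_sim HL) in Hd; subst; reflexivity.
    + intros ->. exists (sasakiL (oc M (Psupp A))); rewrite (mem_P_sim HL); auto.
Qed.
End ConjugatePowerSet.

Lemma Pset_conjK (M N : COLops) (g : M -> N) (g' : N -> M) (Hg : COL_iso g g')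
  (L : LinCar M -> Prop) (L' : LinCar N -> Prop) :
  (forall a, L a -> L' (Lin_conj g g' a)) -> (forall b, L' b -> L (Lin_conj g' g b)) ->
  forall A : PCar L, Pset_conj L g' g (Pset_conj L' g g' A) = A.
Proof.
  intros conj_L conj_L' A. apply Pset_ext; intros a.
  rewrite (mem_Pset_conj (COL_iso_sym Hg) conj_L'); split.
  - intros (b & Hb & ->). apply (mem_Pset_conj Hg conj_L) in Hb; destruct Hb as (a & Ha & ->).
    rewrite (Lin_conjK (COL_iso_sym Hg)); exact Ha.
  - intros Ha. exists (Lin_conj g g' a); rewrite (Lin_conjK (COL_iso_sym Hg)).
    split; [apply (mem_Pset_conj Hg conj_L); eauto|reflexivity].
Qed.

Lemma conjset_id (M : COLops) (A : LinCar M -> Prop) :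
  conjset (fun x : M => x) (fun x : M => x) A = A.
Proof.
  apply pred_ext; intros b; split.
  - intros (a & Ha & Hb). replace b with a; [exact Ha|].
    destruct a as [a pa], b as [b pb]; simpl in Hb; subst. f_equal; apply proof_irrelevance.
  - intros Hb; exists b; split; [exact Hb|reflexivity].
Qed.

Lemma conjset_comp (M N P : COLops) (g : M -> N) (g' : N -> M) (h : N -> P) (h' : P -> N)
  (A : LinCar M -> Prop) :
  COL_iso g g' ->
  conjset (fun x => h (g x)) (fun z => g' (h' z)) A = conjset h h' (conjset g g' A).
Proof.
  intros Hg; apply pred_ext; intros c; split.
  - intros (a & Ha & Hc). exists (Lin_conj g g' a).
    rewrite (Lin_conj_val Hg); split; [exists a; rewrite (Lin_conj_val Hg)|]; auto.
  - intros (b & (a & Ha & Hb) & Hc). exists a; split; [exact Ha|rewrite Hc, Hb; reflexivity].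
Qed.

Lemma T_pi_submonoid (T : Tfun) (M : COLops) :
  T_axioms T -> is_COL M -> pi_submonoid (T (Lin M)).
Proof.
  intros (T1 & _) HM. destruct (T1 _ (Lin_IDA HM)) as (Tsim & Tun & Tmul & Tst).
  split; [exact Tun|split; [exact Tmul|split; [exact Tst|]]].
  intros m; rewrite <- (Lin_sim_sasakiL HM m); apply Tsim.
Qed.

Lemma T_Lin_conj (T : Tfun) (M N : COLops) (g : M -> N) (g' : N -> M) :
  T_axioms T -> is_COL M -> is_COL N -> COL_iso g g' ->
  forall a, T (Lin M) a -> T (Lin N) (Lin_conj g g' a).
Proof.
  intros (_ & Tfun_hom & _) HM HN Hg.
  exact (Tfun_hom _ _ _ (Lin_IDA HM) (Lin_IDA HN) (Lin_conj_hom Hg HM HN)).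
Qed.

Lemma T_Gamma_Pset1 (T : Tfun) (M : COLops) :
  T_axioms T -> is_COL M ->
  forall X, T (Gamma T M) X <-> exists f, T (Lin M) f /\ X = Pset1 (T (Lin M)) f.
Proof.
  intros HT HM. destruct HT as (_ & _ & _ & T3).
  destruct (T3 M HM) as (psi & Hpsi & Tpsi & _ & psi_onto & _).
  assert (Epsi : forall f, T (Lin M) f -> psi f = Pset1 (T (Lin M)) f).
  { intros f Hf; apply Pset_ext; intros a. rewrite Hpsi, mem_Pset1 by exact Hf; reflexivity. }
  intros X; split.
  - intros HX. destruct (psi_onto X HX) as (f & Hf & <-). exists f; auto.
  - intros (f & Hf & ->). rewrite <- (Epsi f Hf). apply Tpsi, Hf.
Qed.

Lemma Gamma_TODA (T : Tfun) (M : COLops) : T_axioms T -> is_COL M -> is_TODA T (Gamma T M).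
Proof.
  intros HT HM.
  pose proof (T_pi_submonoid HT HM) as HL.
  pose proof (T_Gamma_Pset1 HT HM) as TG.
  split; [exact (Pset_IDA HM HL)|split; [exact (tilde_Pset_COL HM HL)|split; [|split]]].
  - intros A HA _ _ Hjn. apply Pset1_ind; [|exact Hjn].
    intros f Hf; apply HA, TG; eauto.
  - intros S S' HS HS'; split.
    + intros E X; split; apply P_jn_Pset1_sub; auto; intros Y HY; apply TG; auto.
    + intros H; rewrite (pred_ext H); reflexivity.
  - intros s t Hs Ht; split; [intros ->; intros w; reflexivity|intros E].
    apply TG in Hs, Ht. destruct Hs as (f & Hf & ->), Ht as (h & Hh & ->).
    f_equal; exact (Pset1_equivk_inj HM HL Hf Hh E).
Qed.

Lemma Gamma_conj_TODA_hom (T : Tfun) (M N : COLops) (g : M -> N) (g' : N -> M) :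
  T_axioms T -> is_COL M -> is_COL N -> COL_iso g g' ->
  TODA_hom (K := Gamma T M) (L := Gamma T N) (Pset_conj (T (Lin N)) g g').
Proof.
  intros HT HM HN Hg.
  pose proof (T_Lin_conj HT HM HN Hg) as conj_T.
  pose proof (T_Lin_conj HT HN HM (COL_iso_sym Hg)) as conj_T'.
  split; [|split].
  - exact (Pset_conj_hom HM HN Hg (T_pi_submonoid HT HM) (T_pi_submonoid HT HN) conj_T).
  - intros A B E.
    rewrite <- (Pset_conjK Hg conj_T conj_T' A), E. apply (Pset_conjK Hg conj_T conj_T').
  - intros B. exists (Pset_conj (T (Lin M)) g' g B).
    apply (Pset_conjK (COL_iso_sym Hg) conj_T' conj_T).
Qed.

Theorem theorem5p5 (T : Tfun) (HT : T_axioms T) :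
  (* objects: Gamma(M) = P(T(Lin M)) is a T-based orthomodular dynamic algebra *)
  (forall M : COLops, is_COL M -> is_TODA T (Gamma T M)) /\
  (* morphisms: Gamma(k)(A) = { k o a o k^-1 | a in A } is a T-ODA morphism *)
  (forall (M N : COLops) (g : M -> N) (g' : N -> M),
     is_COL M -> is_COL N -> COL_iso g g' ->
     exists F : Gamma T M -> Gamma T N,
       (forall A, proj1_sig (F A) = conjset g g' (proj1_sig A)) /\ TODA_hom F) /\
  (* preservation of identities *)
  (forall (M : COLops) (A : Gamma T M), is_COL M ->
     conjset (fun x : M => x) (fun x : M => x) (proj1_sig A) = proj1_sig A) /\
  (* preservation of composition *)
  (forall (M N P : COLops) (g : M -> N) (g' : N -> M) (h : N -> P) (h' : P -> N)
     (A : Gamma T M),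
     is_COL M -> is_COL N -> is_COL P -> COL_iso g g' -> COL_iso h h' ->
     conjset (fun x => h (g x)) (fun z => g' (h' z)) (proj1_sig A)
     = conjset h h' (conjset g g' (proj1_sig A))).
Proof.
  split; [|split; [|split]].
  - intros M HM; exact (Gamma_TODA HT HM).
  - intros M N g g' HM HN Hg. exists (Pset_conj (T (Lin N)) g g'); split.
    + intros A; exact (Pset_conj_val Hg (T_Lin_conj HT HM HN Hg) A).
    + exact (Gamma_conj_TODA_hom HT HM HN Hg).
  - intros M A _; apply conjset_id.
  - intros M N P g g' h h' A _ _ _ Hg _; exact (conjset_comp h h' (proj1_sig A) Hg).
Qed.
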